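(* Let $X$ and $Y$ be tripointed metric spaces and let $f\colon X\to Y$ be a map preserving the distinguished points. If $f$ has any one of the following properties, then so does $Ff=M\otimes f\colon M\otimes X\to M\otimes Y$: (i) $f$ is continuous; (ii) $f$ is Lipschitz; (iii) $f$ is short (i.e. $d_Y(f(x),f(y))\le d_X(x,y)$ for all $x,y$); (iv) $f$ is an isometric embedding.
   Context: A tripointed metric space is a metric space $(X,d)$ with $d(x,y)\le 1$ for all $x,y$, together with three distinct distinguished points $T,L,R\in X$ with pairwise distances equal to $1$. Let $M=\{a,b,c\}$. For a tripointed metric space $X$, give $M\times X$ the metric $d((m,x),(n,y))=\tfrac12 d(x,y)$ if $m=n$ and $=1$ if $m\neq n$. Let $\sim$ be the equivalence relation on $M\times X$ generated by $(b,T)\sim(a,L)$, $(a,R)\sim(c,T)$, $(c,L)\sim(b,R)$. Then $M\otimes X$ is the quotient metric space $(M\times X)/\!\sim$ (distance = infimum over finite chains of sums of segment lengths, identified points having distance $0$; this is a metric), whose elements are written $m\otimes x$, with distinguished points $T=a\otimes T$, $L=b\otimes L$, $R=c\otimes R$; it is again a tripointed metric space. For a map $f\colon X\to Y$ preserving distinguished points, $M\otimes f\colon M\otimes X\to M\otimes Y$ is $(M\otimes f)(m\otimes x)=m\otimes f(x)$. *)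

From Stdlib Require Import Reals.
From Coquelicot Require Import Coquelicot.
Open Scope R_scope.

Record TriMetric := {
  carrier :> Type;
  tdist : carrier -> carrier -> R;
  tdist_refl : forall x, tdist x x = 0;
  tdist_sep : forall x y, tdist x y = 0 -> x = y;
  tdist_sym : forall x y, tdist x y = tdist y x;
  tdist_tri : forall x y z, tdist x z <= tdist x y + tdist y z;
  tdist_le1 : forall x y, tdist x y <= 1;
  ptT : carrier;
  ptL : carrier;
  ptR : carrier;
  tdist_TL : tdist ptT ptL = 1;
  tdist_TR : tdist ptT ptR = 1;
  tdist_LR : tdist ptL ptR = 1
}.

Arguments tdist {t}.
Arguments ptT {t}.
Arguments ptL {t}.
Arguments ptR {t}.

Inductive Mlet := Ma | Mb | Mc.

Definition Mlet_eqb (m n : Mlet) : bool :=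
  match m, n with
  | Ma, Ma | Mb, Mb | Mc, Mc => true
  | _, _ => false
  end.

Definition MX (X : TriMetric) : Type := (Mlet * carrier X)%type.

Definition dMX (X : TriMetric) (p q : MX X) : R :=
  if Mlet_eqb (fst p) (fst q) then tdist (snd p) (snd q) / 2 else 1.

Definition gen (X : TriMetric) (p q : MX X) : Prop :=
  (p = (Mb, ptT) /\ q = (Ma, ptL)) \/
  (p = (Ma, ptR) /\ q = (Mc, ptT)) \/
  (p = (Mc, ptL) /\ q = (Mb, ptR)).

(** [chain X p q c]: there is a finite chain from p to q of total length c,
    where each step either jumps between identified points (cost 0; the
    reflexive-symmetric-transitive closure of [gen] is thus covered) or is a
    segment in M x X costing its distance. *)
Inductive chain (X : TriMetric) : MX X -> MX X -> R -> Prop :=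
| chain_nil : forall p, chain X p p 0
| chain_gen : forall p q r c, (gen X p q \/ gen X q p) -> chain X q r c -> chain X p r c
| chain_seg : forall p q r c, chain X q r c -> chain X p r (dMX X p q + c).

(** Quotient distance on M (x) X, computed on representatives: infimum over
    all finite chains. *)
Definition qdist (X : TriMetric) (p q : MX X) : R :=
  real (Glb_Rbar (chain X p q)).

Definition qT (X : TriMetric) : MX X := (Ma, ptT).
Definition qL (X : TriMetric) : MX X := (Mb, ptL).
Definition qR (X : TriMetric) : MX X := (Mc, ptR).

Definition preserves_pts (X Y : TriMetric) (f : X -> Y) : Prop :=
  f ptT = ptT /\ f ptL = ptL /\ f ptR = ptR.

Definition Mmap (X Y : TriMetric) (f : X -> Y) (p : MX X) : MX Y :=
  (fst p, f (snd p)).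

Definition is_continuous {A B : Type} (dA : A -> A -> R) (dB : B -> B -> R)
  (g : A -> B) : Prop :=
  forall x eps, 0 < eps -> exists delta, 0 < delta /\
    forall y, dA x y < delta -> dB (g x) (g y) < eps.

Definition is_lipschitz {A B : Type} (dA : A -> A -> R) (dB : B -> B -> R)
  (g : A -> B) : Prop :=
  exists K, 0 <= K /\ forall x y, dB (g x) (g y) <= K * dA x y.

Definition is_short {A B : Type} (dA : A -> A -> R) (dB : B -> B -> R)
  (g : A -> B) : Prop :=
  forall x y, dB (g x) (g y) <= dA x y.

Definition is_isometric_embedding {A B : Type} (dA : A -> A -> R)
  (dB : B -> B -> R) (g : A -> B) : Prop :=
  forall x y, dB (g x) (g y) = dA x y.

From Stdlib Require Import Reals Lra Classical.
From Coquelicot Require Import Coquelicot.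
Open Scope R_scope.

(* Since f fixes T, L and R, M ⊗ f sends glued
   points to glued points, so a chain from p to q is carried to a chain from
   the image of p to the image of q whose segments are at most K times longer
   when f is K-Lipschitz with K >= 1 (segments between different copies cost 1
   on both sides); this gives the short and Lipschitz cases.  For an isometric
   embedding, conversely, every jump of a chain in M × Y between image points is
   the image of a jump in M × X, and the segments are absorbed by the triangle
   inequality, so chains in M × Y between image points are no shorter than the
   quotient distance in X.  For continuity at p, take a radius below 1/2 and
   below half the distance from the X-coordinate of p to each distinguished
   point different from it: a chain from p shorter than this radius can only
   jump between p and the point glued to p, so it ends close to one of these
   (at most two) points in its copy, and continuity of f there suffices. *)

Definition glued (X : TriMetric) (p q : MX X) : Prop := gen X p q \/ gen X q p.

Ltac destruct_hyps := repeat match goal with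
  | H : _ /\ _ |- _ => destruct H
  | H : _ \/ _ |- _ => destruct H
  | H : exists _, _ |- _ => destruct H
  end.

Section Quotient.
Variable X : TriMetric.

Lemma tdist_ge0 (x y : X) : 0 <= tdist x y.
Proof.
  pose proof (tdist_tri X x y x) as H.
  rewrite tdist_refl, (tdist_sym X y x) in H; lra.
Qed.

Lemma dMX_ge0 (p q : MX X) : 0 <= dMX X p q.
Proof.
  unfold dMX; destruct (Mlet_eqb _ _); [pose proof (tdist_ge0 (snd p) (snd q))|]; lra.
Qed.

Lemma dMX_refl (p : MX X) : dMX X p p = 0.
Proof. destruct p as [[] x]; unfold dMX; simpl; rewrite tdist_refl; lra. Qed.

Lemma dMX_same_letter (p q : MX X) :
  fst p = fst q -> dMX X p q = tdist (snd p) (snd q) / 2.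
Proof. destruct p as [m x], q as [n y]; simpl; intros ->; destruct n; reflexivity. Qed.

Lemma dMX_lt1_same_letter (p q : MX X) : dMX X p q < 1 -> fst p = fst q.
Proof. destruct p as [[] x], q as [[] y]; unfold dMX; simpl; intro H; auto; lra. Qed.

Lemma dMX_tri (p q r : MX X) : dMX X p r <= dMX X p q + dMX X q r.
Proof.
  destruct p as [m x], q as [n y], r as [k z].
  pose proof (tdist_tri X x y z).
  pose proof (tdist_ge0 x y); pose proof (tdist_ge0 y z); pose proof (tdist_ge0 x z).
  pose proof (tdist_le1 X x y); pose proof (tdist_le1 X y z); pose proof (tdist_le1 X x z).
  unfold dMX; destruct m, n, k; simpl; lra.
Qed.

Lemma chain_ge0 p q c : chain X p q c -> 0 <= c.
Proof. induction 1; [lra | assumption | pose proof (dMX_ge0 p q); lra]. Qed.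

(* [Glb_Rbar] is finite here: the one-segment chain bounds it above, and chain
   lengths are nonnegative. *)
Lemma qdist_is_glb p q : is_glb_Rbar (chain X p q) (Finite (qdist X p q)).
Proof.
  unfold qdist; pose proof (Glb_Rbar_correct (chain X p q)) as H.
  destruct (Glb_Rbar (chain X p q)); simpl in *; auto; exfalso.
  - exact (proj1 H _ (chain_seg X p q q 0 (chain_nil X q))).
  - apply (proj2 H (Finite 0)); intros c Hc; exact (chain_ge0 _ _ _ Hc).
Qed.

Lemma qdist_le_chain p q c : chain X p q c -> qdist X p q <= c.
Proof. exact (proj1 (qdist_is_glb p q) c). Qed.

Lemma qdist_ge_lb p q r : (forall c, chain X p q c -> r <= c) -> r <= qdist X p q.
Proof. intro H; apply (proj2 (qdist_is_glb p q) (Finite r)); exact H. Qed.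

Lemma qdist_lt_chain p q r : qdist X p q < r -> exists c, chain X p q c /\ c < r.
Proof.
  intro H; apply NNPP; intro N.
  enough (r <= qdist X p q) by lra.
  apply qdist_ge_lb; intros c Hc; apply Rnot_lt_le; intro; apply N; eauto.
Qed.

Lemma qdist_le_dMX p q : qdist X p q <= dMX X p q.
Proof. pose proof (qdist_le_chain _ _ _ (chain_seg X p q q 0 (chain_nil X q))); lra. Qed.

Lemma qdist_le_glued p q g g' :
  glued X g g' -> qdist X p q <= dMX X p g + qdist X g' q.
Proof.
  intro Hg; enough (qdist X p q - dMX X p g <= qdist X g' q) by lra.
  apply qdist_ge_lb; intros c Hc.
  pose proof (qdist_le_chain _ _ _ (chain_seg X p g q c (chain_gen X g g' q c Hg Hc))).
  lra.
Qed.

Lemma distinguished_neq : (@ptT X) <> ptL /\ (@ptT X) <> ptR /\ (@ptL X) <> ptR.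
Proof.
  pose proof (tdist_TL X); pose proof (tdist_TR X); pose proof (tdist_LR X).
  repeat split; intro E; rewrite E, tdist_refl in *; lra.
Qed.

Lemma glued_unique s v w : glued X s v -> glued X s w -> v = w.
Proof.
  pose proof distinguished_neq.
  unfold glued, gen; intros; destruct_hyps; subst; congruence.
Qed.

Lemma glued_distinguished s v :
  glued X s v -> snd s = ptT \/ snd s = ptL \/ snd s = ptR.
Proof. unfold glued, gen; intros; destruct_hyps; subst; simpl; auto. Qed.

(* Each copy contains exactly two glued points, and they lie at distance 1. *)
Lemma glued_close_eq s v t w :
  glued X s v -> glued X t w -> fst s = fst t -> tdist (snd s) (snd t) < 1 -> s = t.
Proof.
  pose proof (tdist_TL X); pose proof (tdist_TR X); pose proof (tdist_LR X).
  pose proof (tdist_sym X ptT ptL); pose proof (tdist_sym X ptT ptR);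
  pose proof (tdist_sym X ptL ptR).
  unfold glued, gen; intros; destruct_hyps; subst; simpl in *;
    first [reflexivity | discriminate | lra].
Qed.

End Quotient.

Section Transport.
Variables X Y : TriMetric.
Variable f : X -> Y.
Hypothesis f_pts : preserves_pts X Y f.

Lemma glued_Mmap p q : glued X p q -> glued Y (Mmap X Y f p) (Mmap X Y f q).
Proof.
  destruct f_pts as [ET [EL ER]].
  unfold glued, gen, Mmap; intros; destruct_hyps; subst; simpl;
    rewrite ?ET, ?EL, ?ER; tauto.
Qed.

Lemma gen_Mmap_inv s s' :
  gen Y s s' -> exists g g', gen X g g' /\ s = Mmap X Y f g /\ s' = Mmap X Y f g'.
Proof.
  destruct f_pts as [ET [EL ER]].
  unfold gen, Mmap; intros; destruct_hyps; subst.
  - exists (Mb, ptT), (Ma, ptL); simpl; rewrite ET, EL; auto.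
  - exists (Ma, ptR), (Mc, ptT); simpl; rewrite ET, ER; auto.
  - exists (Mc, ptL), (Mb, ptR); simpl; rewrite EL, ER; auto.
Qed.

Lemma glued_Mmap_inv s s' :
  glued Y s s' -> exists g g', glued X g g' /\ s = Mmap X Y f g /\ s' = Mmap X Y f g'.
Proof.
  intros [H | H]; destruct (gen_Mmap_inv _ _ H) as [g [g' [Hg [-> ->]]]].
  - exists g, g'; unfold glued; auto.
  - exists g', g; unfold glued; auto.
Qed.

Lemma chain_Mmap K :
  (forall p q, dMX Y (Mmap X Y f p) (Mmap X Y f q) <= K * dMX X p q) ->
  forall s t c, chain X s t c ->
  exists c', chain Y (Mmap X Y f s) (Mmap X Y f t) c' /\ c' <= K * c.
Proof.
  intros Hd s t c H; induction H as [p | p q r c Hg _ [c' [Hc' Hle]]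
                                       | p q r c _ [c' [Hc' Hle]]].
  - exists 0; split; [constructor | lra].
  - exists c'; split; auto.
    exact (chain_gen Y _ _ _ _ (glued_Mmap p q Hg) Hc').
  - exists (dMX Y (Mmap X Y f p) (Mmap X Y f q) + c'); split.
    + apply chain_seg; exact Hc'.
    + specialize (Hd p q); lra.
Qed.

Lemma dMX_Mmap_le K :
  1 <= K -> (forall x y, tdist (f x) (f y) <= K * tdist x y) ->
  forall p q, dMX Y (Mmap X Y f p) (Mmap X Y f q) <= K * dMX X p q.
Proof.
  intros HK Hf p q; unfold dMX, Mmap; simpl.
  destruct (Mlet_eqb _ _); [specialize (Hf (snd p) (snd q)) |]; lra.
Qed.

Lemma qdist_Mmap_le K :
  1 <= K -> (forall x y, tdist (f x) (f y) <= K * tdist x y) ->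
  forall p q, qdist Y (Mmap X Y f p) (Mmap X Y f q) <= K * qdist X p q.
Proof.
  intros HK Hf p q.
  rewrite Rmult_comm, <- Rle_div_l by lra.
  apply qdist_ge_lb; intros c Hc.
  destruct (chain_Mmap K (dMX_Mmap_le K HK Hf) _ _ _ Hc) as [c' [Hc' Hle]].
  pose proof (qdist_le_chain _ _ _ _ Hc').
  apply Rle_div_l; lra.
Qed.

Lemma Mmap_short :
  is_short (@tdist X) (@tdist Y) f -> is_short (qdist X) (qdist Y) (Mmap X Y f).
Proof.
  intros Hs p q; rewrite <- (Rmult_1_l (qdist X p q)).
  apply qdist_Mmap_le; [lra |]; intros x y; rewrite Rmult_1_l; apply Hs.
Qed.

Lemma Mmap_lipschitz :
  is_lipschitz (@tdist X) (@tdist Y) f -> is_lipschitz (qdist X) (qdist Y) (Mmap X Y f).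
Proof.
  intros [K [_ Hf]]; pose proof (Rmax_l K 1); pose proof (Rmax_r K 1).
  exists (Rmax K 1); split; [lra |].
  intros p q; apply qdist_Mmap_le; [lra |]; intros x y.
  apply (Rle_trans _ (K * tdist x y)); [apply Hf |].
  apply Rmult_le_compat_r; [apply tdist_ge0 | lra].
Qed.

Section Isometric.
Hypothesis f_iso : is_isometric_embedding (@tdist X) (@tdist Y) f.

Lemma dMX_Mmap_iso p q : dMX Y (Mmap X Y f p) (Mmap X Y f q) = dMX X p q.
Proof. unfold dMX, Mmap; simpl; destruct (Mlet_eqb _ _); [rewrite f_iso |]; reflexivity. Qed.

(* The chain in M × Y may leave the image of [Mmap], so its starting point s is
   compared with the image of p through [dMX Y] rather than pulled back. *)
Lemma qdist_le_chain_Mmap s t c : chain Y s t c ->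
  forall p q, t = Mmap X Y f q -> qdist X p q <= dMX Y (Mmap X Y f p) s + c.
Proof.
  induction 1 as [s | s s' t c Hg _ IH | s s' t c _ IH]; intros p0 q0 Ht; subst.
  - rewrite dMX_Mmap_iso; pose proof (qdist_le_dMX X p0 q0); lra.
  - destruct (glued_Mmap_inv _ _ Hg) as [g [g' [Hgg [-> ->]]]].
    specialize (IH g' q0 eq_refl); rewrite dMX_refl in IH.
    rewrite dMX_Mmap_iso; pose proof (qdist_le_glued X p0 q0 g g' Hgg); lra.
  - specialize (IH p0 q0 eq_refl).
    pose proof (dMX_tri Y (Mmap X Y f p0) s s'); lra.
Qed.

Lemma Mmap_isometric : is_isometric_embedding (qdist X) (qdist Y) (Mmap X Y f).
Proof.
  intros p q; apply Rle_antisym.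
  - apply Mmap_short; intros x y; rewrite f_iso; lra.
  - apply qdist_ge_lb; intros c Hc.
    pose proof (qdist_le_chain_Mmap _ _ _ Hc p q eq_refl) as H.
    rewrite dMX_refl in H; lra.
Qed.

End Isometric.
End Transport.

Section Continuity.
Variable X : TriMetric.
Variable p : MX X.

Definition near_class (a : R) (s : MX X) : Prop :=
  exists u, (u = p \/ glued X p u) /\ fst s = fst u /\ tdist (snd u) (snd s) / 2 <= a.

Definition separating_radius (delta : R) : Prop :=
  0 < delta /\ 2 * delta <= 1 /\
  forall z, (z = ptT \/ z = ptL \/ z = ptR) -> tdist (snd p) z < 2 * delta -> snd p = z.

Lemma separating_radius_shrink delta delta' :
  separating_radius delta -> 0 < delta' <= delta -> separating_radius delta'.
Proof.
  intros [_ [H1 Hz]] Hd; repeat split; try lra.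
  intros z Ez Hlt; apply Hz; [exact Ez | lra].
Qed.

Lemma tdist_isolated (x z : X) : exists d, 0 < d /\ (tdist x z < d -> x = z).
Proof.
  destruct (classic (x = z)) as [E | E]; [exists 1; split; [lra | auto] |].
  exists (tdist x z); split; [| lra].
  destruct (Rle_lt_or_eq_dec _ _ (tdist_ge0 X x z)) as [H | H]; [exact H |].
  exfalso; apply E, tdist_sep; auto.
Qed.

Lemma exists_separating_radius : exists delta, separating_radius delta.
Proof.
  destruct (tdist_isolated (snd p) ptT) as [dT [HdT HT]].
  destruct (tdist_isolated (snd p) ptL) as [dL [HdL HL]].
  destruct (tdist_isolated (snd p) ptR) as [dR [HdR HR]].
  set (m := Rmin (Rmin dT dL) (Rmin dR 1)).
  assert (m <= dT /\ m <= dL /\ m <= dR /\ m <= 1) as [HmT [HmL [HmR Hm1]]].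
  { unfold m; pose proof (Rmin_l (Rmin dT dL) (Rmin dR 1));
    pose proof (Rmin_r (Rmin dT dL) (Rmin dR 1));
    pose proof (Rmin_l dT dL); pose proof (Rmin_r dT dL);
    pose proof (Rmin_l dR 1); pose proof (Rmin_r dR 1); lra. }
  assert (0 < m) by (unfold m; repeat apply Rmin_glb_lt; lra).
  exists (m / 2); repeat split; try lra.
  intros z [-> | [-> | ->]] Hz; [apply HT | apply HL | apply HR]; lra.
Qed.

(* Within a separating radius the only glued point near p is p itself, and the
   only one near the point glued to p is that point. *)
Lemma near_class_glued delta a s s' :
  separating_radius delta -> 0 <= a < delta ->
  near_class a s -> glued X s s' -> near_class a s'.
Proof.
  intros [_ [Hd1 Hz]] Ha [u [Hu [Hf Hdu]]] Hs.
  assert (Hs' : glued X s' s) by (unfold glued in *; tauto).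
  destruct Hu as [-> | Hpu].
  - assert (snd p = snd s) by (apply Hz; [exact (glued_distinguished X s s' Hs) | lra]).
    assert (s = p) as -> by (destruct s, p; simpl in *; congruence).
    exists s'; repeat split; [now right | rewrite tdist_refl; lra].
  - assert (Hup : glued X u p) by (unfold glued in *; tauto).
    assert (s = u) as -> by (symmetry; apply (glued_close_eq X u p s s'); auto; lra).
    assert (s' = p) as -> by (exact (glued_unique X u s' p Hs Hup)).
    exists p; repeat split; [now left | rewrite tdist_refl; lra].
Qed.

Lemma near_class_chain delta : separating_radius delta ->
  forall s t c, chain X s t c ->
  forall a, near_class a s -> 0 <= a -> a + c < delta -> near_class (a + c) t.
Proof.
  intros HD s t c H; induction H as [s | s s' t c Hg Hc IH | s s' t c Hc IH];
    intros a Hs Ha Hlt.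
  - rewrite Rplus_0_r; exact Hs.
  - pose proof (chain_ge0 X _ _ _ Hc).
    apply IH; auto; apply (near_class_glued delta a s s'); auto; lra.
  - pose proof (chain_ge0 X _ _ _ Hc); pose proof (dMX_ge0 X s s').
    destruct HD as [_ [Hd1 _]].
    assert (Hss' : fst s = fst s') by (apply dMX_lt1_same_letter; lra).
    rewrite <- Rplus_assoc; apply IH; [| lra | lra].
    destruct Hs as [u [Hu [Hf Hdu]]]; exists u; repeat split; [exact Hu | congruence |].
    rewrite dMX_same_letter in * by exact Hss'.
    pose proof (tdist_tri X (snd u) (snd s) (snd s')); lra.
Qed.

Lemma qdist_lt_near_class delta q : separating_radius delta -> qdist X p q < delta ->
  exists u, (u = p \/ glued X p u) /\ fst q = fst u /\ tdist (snd u) (snd q) < 2 * delta.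
Proof.
  intros HD Hq; destruct (qdist_lt_chain X p q delta Hq) as [c [Hc Hlt]].
  pose proof (chain_ge0 X _ _ _ Hc).
  assert (Hp : near_class 0 p) by (exists p; repeat split; [now left | rewrite tdist_refl; lra]).
  destruct (near_class_chain delta HD _ _ _ Hc 0 Hp (Rle_refl 0) ltac:(lra))
    as [u [Hu [Hf Hdu]]].
  exists u; repeat split; auto; lra.
Qed.

Lemma qdist_le_class u q :
  (u = p \/ glued X p u) -> fst q = fst u -> qdist X p q <= tdist (snd u) (snd q) / 2.
Proof.
  intros Hu Hf; rewrite <- dMX_same_letter by congruence.
  destruct Hu as [-> | Hpu]; [apply qdist_le_dMX |].
  pose proof (qdist_le_glued X p q p u Hpu); rewrite dMX_refl in *.
  pose proof (qdist_le_dMX X u q); lra.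
Qed.

End Continuity.

(* The class of p has at most two points, so one radius serves both. *)
Lemma continuous_on_class (X Y : TriMetric) (f : X -> Y) :
  is_continuous (@tdist X) (@tdist Y) f ->
  forall (p : MX X) eps, 0 < eps -> exists d, 0 < d /\
  forall u, (u = p \/ glued X p u) ->
  forall y, tdist (snd u) y < d -> tdist (f (snd u)) (f y) < eps.
Proof.
  intros Hc p eps Heps.
  destruct (Hc (snd p) eps Heps) as [d1 [Hd1 H1]].
  destruct (classic (exists v, glued X p v)) as [[v Hv] | N].
  - destruct (Hc (snd v) eps Heps) as [d2 [Hd2 H2]].
    exists (Rmin d1 d2); split; [now apply Rmin_glb_lt |].
    pose proof (Rmin_l d1 d2); pose proof (Rmin_r d1 d2).
    intros u [-> | Hu] y Hy; [apply H1; lra |].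
    assert (u = v) as -> by exact (glued_unique X p u v Hu Hv); apply H2; lra.
  - exists d1; split; [exact Hd1 |].
    intros u [-> | Hu] y Hy; [now apply H1 | exfalso; eauto].
Qed.

Lemma Mmap_continuous (X Y : TriMetric) (f : X -> Y) : preserves_pts X Y f ->
  is_continuous (@tdist X) (@tdist Y) f -> is_continuous (qdist X) (qdist Y) (Mmap X Y f).
Proof.
  intros Hp Hc p eps Heps.
  destruct (continuous_on_class X Y f Hc p eps Heps) as [d [Hd Hf]].
  destruct (exists_separating_radius X p) as [delta0 HD0].
  pose proof (Rmin_l delta0 (d / 2)); pose proof (Rmin_r delta0 (d / 2)).
  set (delta := Rmin delta0 (d / 2)) in *.
  assert (0 < delta) by (apply Rmin_glb_lt; [apply HD0 | lra]).
  assert (HD : separating_radius X p delta) by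
    (apply (separating_radius_shrink X p delta0); [exact HD0 | lra]).
  exists delta; split; [assumption |]; intros q Hq.
  destruct (qdist_lt_near_class X p delta q HD Hq) as [u [Hu [Hfst Hdu]]].
  pose proof (Hf u Hu (snd q) ltac:(lra)).
  assert (Hu' : Mmap X Y f u = Mmap X Y f p \/ glued Y (Mmap X Y f p) (Mmap X Y f u))
    by (destruct Hu as [-> | Hu]; [now left | right; now apply glued_Mmap]).
  pose proof (qdist_le_class Y (Mmap X Y f p) _ (Mmap X Y f q) Hu' Hfst).
  simpl in *; lra.
Qed.

Theorem mainTheorem1 (X Y : TriMetric) (f : X -> Y) :
  preserves_pts X Y f ->
  (is_continuous (@tdist X) (@tdist Y) f ->
     is_continuous (qdist X) (qdist Y) (Mmap X Y f)) /\
  (is_lipschitz (@tdist X) (@tdist Y) f ->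
     is_lipschitz (qdist X) (qdist Y) (Mmap X Y f)) /\
  (is_short (@tdist X) (@tdist Y) f ->
     is_short (qdist X) (qdist Y) (Mmap X Y f)) /\
  (is_isometric_embedding (@tdist X) (@tdist Y) f ->
     is_isometric_embedding (qdist X) (qdist Y) (Mmap X Y f)).
Proof.
  intro Hp; repeat split.
  - now apply Mmap_continuous.
  - now apply Mmap_lipschitz.
  - now apply Mmap_short.
  - now apply Mmap_isometric.
Qed.
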